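(* With the notation below, for every $k\in\mathbb{Z}$ one has $\hat N_{k-1}\subseteq\hat N_k$ and the index $[\hat N_k:\hat N_{k-1}]$ equals $q$.
   Context: Let $F$ be a non-archimedean local field with ring of integers $\mathfrak{o}$, uniformizer $\varpi$, and finite residue field of cardinality $q$. $X=X_{PGL_2(F)}$ is the Bruhat–Tits tree of $PGL_2(F)$: vertices are homothety classes of $\mathfrak{o}$-lattices in $F^2$, with $[L],[L']$ adjacent iff there are representatives with $\varpi L\subsetneq L'\subsetneq L$; it is $(q+1)$-regular. $d$ is the path-length distance; $\mathrm{Aut}(X)$ is the group of distance-preserving bijections of the vertex set with the topology of pointwise convergence, and $PGL_2(F)\hookrightarrow\mathrm{Aut}(X)$ via the linear action on lattices. For an edge $\eta=\{y_1,y_2\}$ and $e\ge1$, $B(\eta,e)=\{y:\min(d(y,y_1),d(y,y_2))\le e\}$, and $\hat G=\hat G^{(e)}=\{g\in\mathrm{Aut}(X):\forall\eta\ \exists g'\in PGL_2(F),\ g|_{B(\eta,e)}=g'|_{B(\eta,e)}\}$ for a fixed $e\ge1$. Ends are equivalence classes of infinite paths (agreeing after an index shift from some point on); $[x,\omega]$ denotes the unique infinite path from vertex $x$ in the class $\omega$. Fix a doubly infinite path $(x_n)_{n\in\mathbb{Z}}$; let $\omega$ be the end of $(x_n)_{n\ge0}$. Set $\hat B=\{g\in\hat G: g(\omega)=\omega\}$, $\hat N=\{b\in\hat B: b(x_i)=x_i\text{ for some }i\in\mathbb{Z}\}$, and for $k\in\mathbb{Z}$, $\hat N_k=\{n\in\hat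 N: n \text{ fixes every vertex of } [x_k,\omega]\}$. *)

From HB Require Import structures.
From mathcomp Require Import all_boot all_order all_algebra.
Set Implicit Arguments. Unset Strict Implicit. Unset Printing Implicit Defensive.
Import Order.TTheory GRing.Theory Num.Theory.
Local Open Scope ring_scope.

Section BTTree.
Variables (F : fieldType) (v : F -> int).
(* v is the normalized discrete valuation on F^x; v 0 is irrelevant (v 0 = +oo). *)

Definition in_o (x : F) : Prop := x = 0 \/ 0 <= v x.
Definition in_m (x : F) : Prop := x = 0 \/ 0 < v x.

Definition vclose (N : int) (a b : F) : Prop := a - b = 0 \/ N <= v (a - b).

(* F is a non-archimedean local field with normalized valuation v and
   residue field of cardinality q: complete discretely valued field with
   finite residue field. *)
Definition is_local_field (q : nat) : Prop :=
  [/\ (forall x y, x != 0 -> y != 0 -> v (x * y) = v x + v y),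
      (forall x y, x != 0 -> y != 0 -> x + y != 0 ->
          Num.min (v x) (v y) <= v (x + y)),
      (exists w, w != 0 /\ v w = 1),
      (exists r : 'I_q -> F,
          [/\ (forall i, in_o (r i)),
              (forall i j, in_m (r i - r j) -> i = j) &
              (forall x, in_o x -> exists i, in_m (x - r i))]) &
      (forall u : nat -> F,
          (forall N : int, exists M : nat, forall i j : nat,
              (M <= i)%N -> (M <= j)%N -> vclose N (u i) (u j)) ->
          exists l, forall N : int, exists M : nat, forall i : nat,
              (M <= i)%N -> vclose N (u i) l)].

Definition vec := 'rV[F]_2.

Definition lattice (L : vec -> Prop) : Prop :=
  exists g : 'M[F]_2, g \in unitmx /\
    forall x, L x <-> exists u : vec, (forall i, in_o (u 0 i)) /\ x = u *m g.

Definition scale (c : F) (L : vec -> Prop) : vec -> Prop :=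
  fun x => exists y, L y /\ x = c *: y.

Definition homothetic (L L' : vec -> Prop) : Prop :=
  exists c, c != 0 /\ forall x, L' x <-> scale c L x.

Definition is_class (C : (vec -> Prop) -> Prop) : Prop :=
  exists L, lattice L /\ forall L', C L' <-> (lattice L' /\ homothetic L L').

(* vertices of the Bruhat-Tits tree: homothety classes of lattices *)
Definition vertex := {C : (vec -> Prop) -> Prop | is_class C}.

Definition strict_sub (A B : vec -> Prop) : Prop :=
  (forall z, A z -> B z) /\ exists z, B z /\ ~ A z.

Definition adj (x y : vertex) : Prop :=
  exists L L' w, [/\ sval x L, sval y L', v w = 1 /\ w != 0,
                     strict_sub (scale w L) L' & strict_sub L' L].

Inductive walk : nat -> vertex -> vertex -> Prop :=
| walk0 x : walk 0 x x
| walkS n x y z : adj x y -> walk n y z -> walk n.+1 x z.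

Definition dist (x y : vertex) (n : nat) : Prop :=
  walk n x y /\ forall m, walk m x y -> (n <= m)%N.

Definition is_aut (g : vertex -> vertex) : Prop :=
  bijective g /\ forall x y n, dist x y n <-> dist (g x) (g y) n.

(* linear action of GL_2(F) on lattices (row vectors, right action) *)
Definition mat_image (g : 'M[F]_2) (L : vec -> Prop) : vec -> Prop :=
  fun x => exists y, L y /\ x = y *m g.

Definition mat_acts (g : 'M[F]_2) (x y : vertex) : Prop :=
  forall L, sval x L -> sval y (mat_image g L).

Definition in_ball (e : nat) (y1 y2 y : vertex) : Prop :=
  exists n, (n <= e)%N /\ (dist y y1 n \/ dist y y2 n).

Definition in_Ghat (e : nat) (g : vertex -> vertex) : Prop :=
  is_aut g /\ forall y1 y2, adj y1 y2 ->
    exists g' : 'M[F]_2, g' \in unitmx /\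
      forall y, in_ball e y1 y2 y -> mat_acts g' y (g y).

Definition ray (p : nat -> vertex) : Prop :=
  forall n, adj (p n) (p n.+1) /\ p n <> p n.+2.

Definition ray_equiv (p p' : nat -> vertex) : Prop :=
  exists a b : nat, forall n, p (n + a)%N = p' (n + b)%N.

Definition dpath (xs : int -> vertex) : Prop :=
  forall n : int, adj (xs n) (xs (n + 1)) /\ xs n <> xs (n + 2).

(* representative ray of the end omega *)
Definition end_ray (xs : int -> vertex) : nat -> vertex := fun n => xs n%:Z.

Definition in_Bhat e xs (g : vertex -> vertex) : Prop :=
  in_Ghat e g /\ ray_equiv (fun n => g (end_ray xs n)) (end_ray xs).

Definition in_Nhat e xs (g : vertex -> vertex) : Prop :=
  in_Bhat e xs g /\ exists i : int, g (xs i) = xs i.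

Definition in_Nk e xs (k : int) (g : vertex -> vertex) : Prop :=
  in_Nhat e xs g /\
  forall p, ray p -> p 0%N = xs k -> ray_equiv p (end_ray xs) ->
    forall n, g (p n) = p n.

Definition in_coset (H : (vertex -> vertex) -> Prop) (a b : vertex -> vertex) :=
  exists m, H m /\ forall x, b x = a (m x).

Definition has_index (G H : (vertex -> vertex) -> Prop) (q : nat) : Prop :=
  exists h : 'I_q -> (vertex -> vertex),
    (forall i, G (h i)) /\
    forall b, G b -> exists i, in_coset H (h i) b /\
      forall j, in_coset H (h j) b -> j = i.

End BTTree.

(* Vertices of the Bruhat-Tits tree are described by invertible 2x2 matrices:
   the class [cls P] of the lattice o^2 P.  We write D n = diag(1, pi^n),
   At t = [[pi, 0], [t, 1]], and Pu s, Lo s for the upper and lower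
   unipotent matrices.  The proof rests on three facts.
   (1) Neighbours.  The neighbours of [cls g] are [cls (D 1 g)] and the q
       classes [cls (At t g)], t in o (mod m): a lattice L' with
       pi L < L' < L corresponds to an o-submodule of o^2 between pi o^2 and
       o^2, and such a submodule is a line mod pi.
   (2) No cycles.  A non-backtracking walk y_0, y_1, ... with y_0 = cls Q,
       y_1 = cls (D 1 Q) satisfies y_i = cls (D i (Pu s Q)) for some s in o,
       so it never comes back to y_0; by completeness of F every ray even has
       coordinates y_i = cls (D i H).  Consequently the ray from x_k towards
       omega is x_k, x_(k+1), ..., and N^_k is the set of elements of G^
       fixing all x_n, n >= k; this gives N^_(k-1) <= N^_k.
   (3) Cosets.  Writing x_(k-1+n) = cls (D n H), the matrices
       M_i = H^-1 Lo(r_i/pi) H (r_i running over residues) fix all x_n for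
       n >= k and send x_(k-1) to the q distinct neighbours of x_k other
       than x_(k+1); every b in N^_k sends x_(k-1) to one of these, so the
       action of the M_i is a system of representatives of N^_k / N^_(k-1). *)

From HB Require Import structures.
From mathcomp Require Import all_boot all_order all_algebra.
From mathcomp Require Import ring zify.
From Stdlib Require Import ProofIrrelevance FunctionalExtensionality.
From Stdlib Require Import PropExtensionality ClassicalEpsilon Classical.
From Stdlib Require Import ClassicalDescription.
Set Implicit Arguments. Unset Strict Implicit. Unset Printing Implicit Defensive.
Import Order.TTheory GRing.Theory Num.Theory.
Local Open Scope ring_scope.

(* Explicit 2x2 matrices and row vectors, so that matrix identities reduce to
   identities between entries that [ring]/[field] can decide. *)
Section TwoByTwo.
Variable F : fieldType.
Notation i0 := (@ord0 1).
Notation i1 := (@ord_max 1).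

Definition mx2 (a b c d : F) : 'M[F]_2 :=
  \matrix_(i, j) if i == i0 then (if j == i0 then a else b)
                 else (if j == i0 then c else d).
Definition rv (a b : F) : 'rV[F]_2 := \row_(j < 2) if j == i0 then a else b.

Lemma ord2P (i : 'I_2) : i = i0 \/ i = i1.
Proof. case: i => [[|[|m]]] H; [left|right|]; try exact: val_inj. by []. Qed.

Lemma mx2E a b c d : [/\ mx2 a b c d i0 i0 = a, mx2 a b c d i0 i1 = b,
   mx2 a b c d i1 i0 = c & mx2 a b c d i1 i1 = d].
Proof. by rewrite !mxE. Qed.

Lemma rvE a b : rv a b ord0 i0 = a /\ rv a b ord0 i1 = b.
Proof. by rewrite !mxE. Qed.

Lemma mx2_eta (M : 'M[F]_2) : M = mx2 (M i0 i0) (M i0 i1) (M i1 i0) (M i1 i1).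
Proof.
apply/matrixP => i j; rewrite mxE.
by case: (ord2P i) => ->; case: (ord2P j) => ->.
Qed.

Lemma rv_eta (u : 'rV[F]_2) : u = rv (u ord0 i0) (u ord0 i1).
Proof.
apply/matrixP => i j; rewrite mxE.
have -> : i = ord0 by apply: val_inj; case: i => [[|]].
by case: (ord2P j) => ->.
Qed.

Lemma mx2_mul a b c d a' b' c' d' :
  mx2 a b c d *m mx2 a' b' c' d' =
  mx2 (a*a' + b*c') (a*b' + b*d') (c*a' + d*c') (c*b' + d*d').
Proof.
apply/matrixP => i j; rewrite !mxE !big_ord_recr !big_ord0 /= !add0r !mxE.
by case: (ord2P i) => ->; case: (ord2P j) => ->.
Qed.

Lemma rv_mul a b a' b' c' d' :
  rv a b *m mx2 a' b' c' d' = rv (a*a' + b*c') (a*b' + b*d').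
Proof.
apply/matrixP => i j; rewrite !mxE !big_ord_recr !big_ord0 /= !add0r !mxE.
by case: (ord2P j) => ->.
Qed.

Lemma mx2_inj a b c d a' b' c' d' :
  mx2 a b c d = mx2 a' b' c' d' -> [/\ a = a', b = b', c = c' & d = d'].
Proof.
move=> H; have := mx2E a b c d; rewrite H.
by case: (mx2E a' b' c' d') => -> -> -> -> [].
Qed.

Lemma rv_inj a b a' b' : rv a b = rv a' b' -> a = a' /\ b = b'.
Proof. move=> H; have := rvE a b; rewrite H; by case: (rvE a' b') => -> -> []. Qed.

Lemma mx2_scale k a b c d : k *: mx2 a b c d = mx2 (k*a) (k*b) (k*c) (k*d).
Proof.
apply/matrixP => i j; rewrite !mxE.
by case: (ord2P i) => ->; case: (ord2P j) => ->.
Qed.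

Lemma rv_scale k a b : k *: rv a b = rv (k*a) (k*b).
Proof. apply/matrixP => i j; rewrite !mxE; by case: (ord2P j) => ->. Qed.

Lemma rv_add a b a' b' : rv a b + rv a' b' = rv (a+a') (b+b').
Proof. apply/matrixP => i j; rewrite !mxE; by case: (ord2P j) => ->. Qed.

Lemma mx2_1 : (1%:M : 'M[F]_2) = mx2 1 0 0 1.
Proof.
apply/matrixP => i j; rewrite !mxE.
by case: (ord2P i) => ->; case: (ord2P j) => ->.
Qed.

Lemma mx2_unit a b c d (P : 'M[F]_2) :
  a * d - b * c != 0 -> P \in unitmx -> mx2 a b c d *m P \in unitmx.
Proof.
move=> h hP; rewrite unitmx_mul hP andbT.
have := @mulmx1_unit _ _ (mx2 a b c d) ((a * d - b * c)^-1 *: mx2 d (-b) (-c) a).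
rewrite -scalemxAr mx2_mul mx2_scale mx2_1.
set k := (a * d - b * c)^-1.
have -> : mx2 (k * (a * d + b * - c)) (k * (a * - b + b * a))
              (k * (c * d + d * - c)) (k * (c * - b + d * a)) = mx2 1 0 0 1.
  by congr mx2; rewrite /k; field.
by move=> /(_ erefl) [].
Qed.

Lemma rv_cancel (P : 'M[F]_2) a b c d :
  P \in unitmx -> rv a b *m P = rv c d *m P -> a = c /\ b = d.
Proof. by move=> hP e; apply: rv_inj; rewrite -(mulmxK hP (rv a b)) e mulmxK. Qed.

Lemma mulmx_cancel (A B P : 'M[F]_2) : P \in unitmx -> A *m P = B *m P -> A = B.
Proof. by move=> hP e; rewrite -(mulmxK hP A) e mulmxK. Qed.
End TwoByTwo.

Section BruhatTits.
Variables (F : fieldType) (v : F -> int).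
Hypothesis vM : forall x y, x != 0 -> y != 0 -> v (x * y) = v x + v y.
Hypothesis vU : forall x y, x != 0 -> y != 0 -> x + y != 0 ->
          Num.min (v x) (v y) <= v (x + y).
Variable pi : F.
Hypothesis pi0 : pi != 0.
Hypothesis vpi : v pi = 1.

Notation o := (in_o v).
Notation m := (in_m v).
Notation i0 := (@ord0 1).
Notation i1 := (@ord_max 1).
Notation vertex := (vertex v).

Lemma v1 : v 1 = 0.
Proof.
have h1 : forall a : int, a = a + a -> a = 0 by move=> a; lia.
apply: h1; have := vM (oner_neq0 F) (oner_neq0 F); by rewrite mulr1.
Qed.

Lemma vN x : x != 0 -> v (- x) = v x.
Proof.
move=> x0; have h : (-1 : F) != 0 by rewrite oppr_eq0 oner_neq0.
have vN1 : v (-1) = 0 by have := vM h h; rewrite mulrNN mulr1 v1 => H; lia.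
by rewrite -mulN1r vM // vN1 add0r.
Qed.

Lemma vV x : x != 0 -> v x^-1 = - v x.
Proof.
move=> x0; have h : x^-1 != 0 by rewrite invr_eq0.
have := vM x0 h; rewrite mulfV // v1 => H; lia.
Qed.

Lemma o0 : o 0. Proof. by left. Qed.
Lemma o1 : o 1. Proof. by right; rewrite v1. Qed.

Lemma oM x y : o x -> o y -> o (x * y).
Proof.
case: (eqVneq x 0) => [->|x0]; first by rewrite mul0r => _ _; left.
case: (eqVneq y 0) => [->|y0]; first by rewrite mulr0 => _ _; left.
move=> [/eqP|hx]; first by rewrite (negbTE x0).
move=> [/eqP|hy]; first by rewrite (negbTE y0).
right; rewrite vM //; lia.
Qed.

Lemma oN x : o x -> o (- x).
Proof.
case: (eqVneq x 0) => [->|x0]; first by rewrite oppr0 => _; left.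
move=> [/eqP|hx]; first by rewrite (negbTE x0).
by right; rewrite vN.
Qed.

Lemma oD x y : o x -> o y -> o (x + y).
Proof.
case: (eqVneq x 0) => [->|x0]; first by rewrite add0r.
case: (eqVneq y 0) => [->|y0]; first by rewrite addr0.
case: (eqVneq (x + y) 0) => [->|s0]; first by left.
move=> [/eqP|hx]; first by rewrite (negbTE x0).
move=> [/eqP|hy]; first by rewrite (negbTE y0).
right; have := vU x0 y0 s0; rewrite /Num.min.
by case: ifP => _ h; [exact: (le_trans hx h)|exact: (le_trans hy h)].
Qed.

Lemma oB x y : o x -> o y -> o (x - y).
Proof. by move=> hx hy; apply: oD => //; apply: oN. Qed.

Lemma opi : o pi. Proof. by right; rewrite vpi. Qed.

Lemma oX n : o (pi ^+ n).
Proof.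
elim: n => [|n IH]; first by rewrite expr0; apply: o1.
by rewrite exprS; apply: oM => //; apply: opi.
Qed.

Lemma o_piV : ~ o pi^-1.
Proof.
case => [/eqP|]; first by rewrite invr_eq0 (negbTE pi0).
by rewrite vV // vpi.
Qed.

Lemma mP x : m x <-> o (x / pi).
Proof.
case: (eqVneq x 0) => [->|x0]; first by rewrite mul0r; split => _; left.
have h : pi^-1 != 0 by rewrite invr_eq0.
have xp : x / pi != 0 by rewrite mulf_neq0.
rewrite /in_m /in_o vM // vV // vpi; split.
  by case => [/eqP|]; [rewrite (negbTE x0)| move=> H; right; lia].
by case => [/eqP|]; [rewrite (negbTE xp)| move=> H; right; lia].
Qed.

Lemma mMo x y : m x -> o y -> m (x * y).
Proof. by move/mP=> hx hy; apply/mP; rewrite mulrAC; apply: oM. Qed.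

Lemma mN x : m x -> m (- x).
Proof. move=> /mP hx; apply/mP; rewrite mulNr; exact: oN. Qed.

Lemma m0 : m 0. Proof. by left. Qed.

Lemma mpi : m pi. Proof. by right; rewrite vpi. Qed.

Lemma o_unit x : o x -> ~ m x -> x != 0 /\ o x^-1.
Proof.
move=> hx hm; have x0 : x != 0 by apply/eqP => h; apply: hm; left.
split => //; case: hx => [/eqP|hx]; first by rewrite (negbTE x0).
right; rewrite vV //; have : ~ (0 < v x) by move=> h; apply: hm; right.
lia.
Qed.

Lemma vX n : v (pi ^+ n) = n%:Z.
Proof.
elim: n => [|n IH]; first by rewrite expr0 v1.
rewrite exprS vM ?expf_neq0 // IH vpi; lia.
Qed.

Lemma vcloseP n a b : vclose v n%:Z a b <-> o ((a - b) / pi ^+ n).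
Proof.
rewrite /vclose; have pn : pi ^+ n != 0 by rewrite expf_neq0.
case: (eqVneq (a - b) 0) => [->|d0]; first by rewrite mul0r; split; left.
split.
  case => [/eqP|h]; first by rewrite (negbTE d0).
  by right; rewrite vM ?invr_eq0 // vV // vX; lia.
case => [/eqP|h]; first by rewrite mulf_eq0 invr_eq0 (negbTE pn) (negbTE d0).
by right; move: h; rewrite vM ?invr_eq0 // vV // vX subr_ge0.
Qed.

Lemma vclose_mono (N K : int) a b : N <= K -> vclose v K a b -> vclose v N a b.
Proof. rewrite /vclose; move=> h [->|h']; [by left|right; exact: le_trans h h']. Qed.

Definition introw (u : 'rV[F]_2) := forall i, o (u 0 i).
Definition intm (M : 'M[F]_2) := forall i j, o (M i j).
Definition Lat (P : 'M[F]_2) : vec F -> Prop :=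
  fun x => exists u, introw u /\ x = u *m P.

Lemma introw_rv a b : introw (rv a b) <-> o a /\ o b.
Proof.
split; first by move=> h; case: (rvE a b) => h1 h2; split; [rewrite -h1|rewrite -h2]; apply: h.
case=> ha hb i; rewrite !mxE; by case: (ord2P i) => ->.
Qed.

Lemma intm_mx2 a b c d : intm (mx2 a b c d) <-> [/\ o a, o b, o c & o d].
Proof.
split; first by move=> h; case: (mx2E a b c d) => h1 h2 h3 h4; split;
  [rewrite -h1|rewrite -h2|rewrite -h3|rewrite -h4]; apply: h.
case=> ha hb hc hd i j; rewrite !mxE.
by case: (ord2P i) => ->; case: (ord2P j) => ->.
Qed.

Lemma introw_mul u M : introw u -> intm M -> introw (u *m M).
Proof.
rewrite (rv_eta u) (mx2_eta M) rv_mul => /introw_rv [h1 h2] /intm_mx2 [h3 h4 h5 h6].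
apply/introw_rv; split; apply: oD; apply: oM => //.
Qed.

Lemma intm1 : intm 1%:M.
Proof. rewrite mx2_1; apply/intm_mx2; split; (apply: o0 || apply: o1). Qed.

Lemma Lat_rv P z : Lat P z <-> exists a b, [/\ o a, o b & z = rv a b *m P].
Proof.
split; first by case=> u [hu ->]; exists (u 0 i0), (u 0 i1); split => //; rewrite -rv_eta.
by case=> a [b [ha hb ->]]; exists (rv a b); split => //; apply/introw_rv.
Qed.

Lemma lattice_Lat P : P \in unitmx -> lattice v (Lat P).
Proof. by move=> hP; exists P; split. Qed.

Lemma lattice_ext (L L' : vec F -> Prop) :
  lattice v L -> (forall z, L z <-> L' z) -> lattice v L'.
Proof. case=> P [hP h] e; exists P; split => // x; rewrite -e; exact: h. Qed.

Lemma scale_Lat c P x : scale c (Lat P) x <-> Lat (c *: P) x.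
Proof.
split.
  by case=> y [[u [hu ->]] ->]; exists u; split => //; rewrite scalemxAr.
by case=> u [hu ->]; exists (u *m P); split; [exists u|rewrite scalemxAr].
Qed.

Lemma Lat_sub P Q :
  (forall z, Lat P z -> Lat Q z) <-> exists U, intm U /\ P = U *m Q.
Proof.
split; last first.
  case=> U [hU ->] z [u [hu ->]]; exists (u *m U); split; last by rewrite mulmxA.
  exact: introw_mul.
move=> h.
have [u0 [h0 e0]] : Lat Q (rv 1 0 *m P).
  by apply: h; exists (rv 1 0); split => //; apply/introw_rv; split; [exact: o1|exact: o0].
have [u1 [h1 e1]] : Lat Q (rv 0 1 *m P).
  by apply: h; exists (rv 0 1); split => //; apply/introw_rv; split; [exact: o0|exact: o1].
exists (mx2 (u0 0 i0) (u0 0 i1) (u1 0 i0) (u1 0 i1)); split.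
  by apply/intm_mx2; split; [exact: h0|exact: h0|exact: h1|exact: h1].
move: e0 e1; rewrite (mx2_eta P) (mx2_eta Q) (rv_eta u0) (rv_eta u1).
rewrite !rv_mul mx2_mul !mxE /= => /rv_inj [<- <-] /rv_inj [<- <-].
by rewrite !mul1r !mul0r !addr0 !add0r.
Qed.

Lemma homothetic_ext (A B B' : vec F -> Prop) :
  (forall z, B z <-> B' z) -> homothetic A B -> homothetic A B'.
Proof. move=> e [c [c0 h]]; exists c; split => // x; by rewrite -e. Qed.

Lemma homothetic_refl (A : vec F -> Prop) : homothetic A A.
Proof.
exists 1; split; first exact: oner_neq0.
by move=> x; split; [move=> h; exists x; rewrite scale1r|case=> y [hy ->]; rewrite scale1r].
Qed.

Lemma homothetic_sym (A B : vec F -> Prop) : homothetic A B -> homothetic B A.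
Proof.
case=> c [c0 h]; exists c^-1; split; first by rewrite invr_eq0.
move=> x; split.
  move=> hx; exists (c *: x); split; last by rewrite scalerA mulVf // scale1r.
  by apply/h; exists x.
by case=> y [/h [z [hz ->]] ->]; rewrite scalerA mulVf // scale1r.
Qed.

Lemma homothetic_trans (A B C : vec F -> Prop) :
  homothetic A B -> homothetic B C -> homothetic A C.
Proof.
case=> c [c0 h] [d [d0 h']]; exists (d * c); split; first by rewrite mulf_neq0.
move=> x; rewrite h'; split.
  by case=> y [/h [z [hz ->]] ->]; exists z; rewrite scalerA.
by case=> y [hy ->]; exists (c *: y); split; [apply/h; exists y|rewrite scalerA].
Qed.

(* Vertices as classes of matrices: [cls P] is the homothety class of o^2 P
   (with a junk value when P is singular). *)

Definition CL (P : 'M[F]_2) : (vec F -> Prop) -> Prop :=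
  fun L => lattice v L /\ homothetic (Lat P) L.

Lemma is_class_CL P : P \in unitmx -> is_class v (CL P).
Proof. move=> hP; exists (Lat P); split; [exact: lattice_Lat|by []]. Qed.

Definition cls1 : vertex := exist _ (CL 1%:M) (is_class_CL (unitmx1 _ _)).

Definition cls (P : 'M[F]_2) : vertex :=
  match excluded_middle_informative (is_class v (CL P)) with
  | left h => exist _ (CL P) h
  | right _ => cls1
  end.

Lemma cls_val P : P \in unitmx -> sval (cls P) = CL P.
Proof.
move=> hP; rewrite /cls; case: excluded_middle_informative => // h.
by case: h; exact: is_class_CL.
Qed.

Lemma vertex_eq (x y : vertex) : (forall L, sval x L <-> sval y L) -> x = y.
Proof.
case: x => [C1 h1]; case: y => [C2 h2] /= e.
have E : C1 = C2.
  by apply: functional_extensionality => L; apply: propositional_extensionality.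
subst C2; f_equal; exact: proof_irrelevance.
Qed.

Lemma sval_cls P : P \in unitmx -> sval (cls P) (Lat P).
Proof.
by move=> hP; rewrite cls_val //; split; [exact: lattice_Lat|exact: homothetic_refl].
Qed.

Lemma cls_eq_hom P Q : P \in unitmx -> Q \in unitmx ->
  (cls P = cls Q <-> homothetic (Lat P) (Lat Q)).
Proof.
move=> hP hQ; split.
  by move=> e; have := sval_cls hQ; rewrite -e cls_val // => -[].
move=> h; apply: vertex_eq => L; rewrite !cls_val //; split; case=> hL hh; split => //.
  exact: homothetic_trans (homothetic_sym h) hh.
exact: homothetic_trans h hh.
Qed.

Lemma cls_eqP P Q : P \in unitmx -> Q \in unitmx ->
  (cls P = cls Q <-> exists c, c != 0 /\ exists U V, [/\ intm U, intm V,
      Q = U *m (c *: P) & c *: P = V *m Q]).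
Proof.
move=> hP hQ; rewrite cls_eq_hom //; split.
  case=> c [c0 h]; exists c; split => //.
  have [U [hU eU]] : exists U, intm U /\ Q = U *m (c *: P).
    by apply/Lat_sub => z /h /scale_Lat.
  have [V [hV eV]] : exists V, intm V /\ c *: P = V *m Q.
    by apply/Lat_sub => z /scale_Lat /h.
  by exists U, V.
case=> c [c0 [U [V [hU hV eU eV]]]]; exists c; split => //.
have h1 : forall x, Lat Q x -> Lat (c *: P) x by apply/Lat_sub; exists U.
have h2 : forall x, Lat (c *: P) x -> Lat Q x by apply/Lat_sub; exists V.
move=> x; rewrite scale_Lat; split; [exact: h1|exact: h2].
Qed.

Lemma vertex_cls (x : vertex) L : sval x L ->
  exists P, [/\ P \in unitmx, (forall z, L z <-> Lat P z) & x = cls P].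
Proof.
case: x => C [L0 [hL0 hC]] /= hL.
have [hLl hh] := (proj1 (hC L) hL).
case: (hLl) => P [hP eP]; exists P; split => //.
apply: vertex_eq => L'; rewrite cls_val //= hC; split; case=> h1 h2; split => //.
  apply: homothetic_trans h2; apply: homothetic_sym; apply: homothetic_ext hh; exact: eP.
by apply: homothetic_trans h2; apply: homothetic_ext hh => z; rewrite eP.
Qed.

Lemma vertex_ex (x : vertex) : exists P, P \in unitmx /\ x = cls P.
Proof.
have [L0 [hL0 hC]] := svalP x.
have hx : sval x L0 by apply/hC; split => //; exact: homothetic_refl.
by have [P [hP _ ->]] := vertex_cls hx; exists P.
Qed.

Lemma vertex_member (x : vertex) L : sval x L ->
  lattice v L /\ (forall L', sval x L' <-> lattice v L' /\ homothetic L L').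
Proof.
case: x => C [L0 [hL0 hC]] /= hL; have [h1 h2] := proj1 (hC L) hL; split => // L'.
rewrite hC; split; case=> a b; split => //.
  exact: homothetic_trans (homothetic_sym h2) b.
exact: homothetic_trans h2 b.
Qed.

Lemma sval_ext (x : vertex) L L' :
  sval x L -> (forall z, L z <-> L' z) -> sval x L'.
Proof.
move=> hL e; have [h1 h2] := vertex_member hL; apply/h2; split.
  exact: lattice_ext e.
exact: (homothetic_ext e (homothetic_refl L)).
Qed.

Lemma sval_scale (x : vertex) L c : c != 0 -> sval x L -> sval x (scale c L).
Proof.
move=> c0 hL; have [h1 h2] := vertex_member hL; apply/h2; split; last by exists c.
case: h1 => P [hP e]; exists (c *: P); split; first by rewrite unitmxZ ?unitfE.
move=> z; change (scale c L z <-> Lat (c *: P) z); rewrite -scale_Lat.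
by split; case=> y [hy ->]; exists y; split => //; apply/e.
Qed.

Lemma svalP_cls (P : 'M[F]_2) L : P \in unitmx ->
  sval (cls P) L <-> exists c, c != 0 /\ forall z, L z <-> Lat (c *: P) z.
Proof.
move=> hP; split.
  rewrite cls_val // => -[_ [c [c0 e]]]; exists c; split => // z; by rewrite e scale_Lat.
case=> c [c0 e]; apply: (@sval_ext _ (scale c (Lat P))).
  exact: sval_scale (sval_cls hP).
by move=> z; rewrite e scale_Lat.
Qed.

Lemma cls_of_Lat (y : vertex) L Q :
  sval y L -> (forall z, L z <-> Lat Q z) -> Q \in unitmx -> y = cls Q.
Proof.
move=> hL e hQ; have [P [hP eP ->]] := vertex_cls hL.
apply/cls_eq_hom => //; apply: (homothetic_ext (B := Lat P)); last exact: homothetic_refl.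
by move=> z; rewrite -eP e.
Qed.

Lemma cls_eqM (M N P : 'M[F]_2) : M \in unitmx -> N \in unitmx -> P \in unitmx ->
  cls (M *m P) = cls (N *m P) ->
  exists c, c != 0 /\ exists U V, [/\ intm U, intm V, N = U *m (c *: M) & c *: M = V *m N].
Proof.
move=> hM hN hP /cls_eqP; rewrite !unitmx_mul hM hN hP.
move=> /(_ isT isT) [c [c0 [U [V [hU hV e1 e2]]]]].
exists c; split => //; exists U, V; split => //.
  by apply: (mulmx_cancel hP); rewrite e1 -!mulmxA scalemxAl.
by apply: (mulmx_cancel hP); rewrite -mulmxA -e2 scalemxAl.
Qed.

Lemma cls_scale c (P : 'M[F]_2) : c != 0 -> P \in unitmx -> cls (c *: P) = cls P.
Proof.
move=> c0 hP; apply/esym/cls_eqP => //; first by rewrite unitmxZ ?unitfE.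
exists c; split => //; exists 1%:M, 1%:M; split; try exact: intm1; by rewrite mul1mx.
Qed.

Lemma cls_unimod a b c d (P : 'M[F]_2) : [/\ o a, o b, o c & o d] ->
  a * d - b * c != 0 -> o (a * d - b * c)^-1 -> P \in unitmx ->
  cls (mx2 a b c d *m P) = cls P.
Proof.
move=> [ha hb hc hd] h0 hi hP.
set W := (a * d - b * c)^-1 *: mx2 d (-b) (-c) a.
have eWU : W *m mx2 a b c d = 1%:M.
  by rewrite -scalemxAl mx2_mul mx2_scale mx2_1; congr mx2; field.
have [hW' hU'] := mulmx1_unit eWU.
apply/cls_eqP; rewrite ?unitmx_mul ?hU' //.
exists 1; split; first exact: oner_neq0.
exists W, (mx2 a b c d); split.
- by rewrite /W mx2_scale; apply/intm_mx2; split; apply: oM => //; apply: oN.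
- exact/intm_mx2.
- by rewrite scale1r mulmxA eWU mul1mx.
- by rewrite scale1r.
Qed.

Lemma cls_det1 a b c d (P : 'M[F]_2) : [/\ o a, o b, o c & o d] ->
  a * d - b * c = 1 -> P \in unitmx -> cls (mx2 a b c d *m P) = cls P.
Proof. move=> h e hP; apply: cls_unimod => //; rewrite e ?invr1 ?oner_neq0 //; exact: o1. Qed.

(* The neighbours of a vertex [cls g] correspond to the o-submodules T of
   o^2 with pi o^2 < T < o^2 (strict inclusions); [sandwich T] expresses this
   for T seen as a relation on coordinates. *)
Record sandwich (T : F -> F -> Prop) : Prop := Sandwich {
  sw_add : forall a b c d, T a b -> T c d -> T (a + c) (b + d);
  sw_scale : forall al a b, o al -> T a b -> T (al * a) (al * b);
  sw_int : forall a b, T a b -> o a /\ o b;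
  sw_pi : forall a b, o a -> o b -> T (pi * a) (pi * b);
  sw_proper : exists a b, [/\ o a, o b & ~ T a b];
  sw_big : exists a b, T a b /\ ~ (m a /\ m b)
}.

Section Sandwich.
Variable T : F -> F -> Prop.
Hypothesis hT : sandwich T.

Lemma sw_not_full : T 1 0 -> T 0 1 -> False.
Proof.
move=> h1 h2; case: (sw_proper hT) => a [b [ha hb hn]]; apply: hn.
have := sw_add hT (sw_scale hT ha h1) (sw_scale hT hb h2).
by rewrite !mulr1 !mulr0 addr0 add0r.
Qed.

Lemma sw_opp a b : T a b -> T (- a) (- b).
Proof. move=> h; have := sw_scale hT (oN o1) h; by rewrite !mulN1r. Qed.

Lemma sw_m a b : m a -> m b -> T a b.
Proof.
move=> /mP ha /mP hb; have := sw_pi hT ha hb.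
by rewrite ![pi * (_ / pi)]mulrC -!mulrA mulVf // !mulr1.
Qed.

Lemma sw_diag : T 1 0 -> forall a b, T a b <-> o a /\ m b.
Proof.
move=> T10 a b; split.
  move=> h; have [oa ob] := sw_int hT h; split => //.
  case: (classic (m b)) => // mb; exfalso.
  have [b00 oib] := o_unit ob mb.
  have h2 : T 0 b.
    have := sw_add hT h (sw_opp (sw_scale hT oa T10)).
    by rewrite mulr1 mulr0 subrr oppr0 addr0.
  have := sw_scale hT oib h2; rewrite mulr0 mulVf // => h3; exact: sw_not_full T10 h3.
case=> oa mb; have := sw_add hT (sw_scale hT oa T10) (sw_m m0 mb).
by rewrite mulr1 mulr0 addr0 add0r.
Qed.

Lemma sw_graph t : o t -> T t 1 -> forall a b, T a b <-> o b /\ m (a - b * t).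
Proof.
move=> ot Tt1 a b; split.
  move=> h; have [oa ob] := sw_int hT h; split => //.
  case: (classic (m (a - b * t))) => // md; exfalso.
  have od : o (a - b * t) by apply: oB => //; apply: oM.
  have [d0 oid] := o_unit od md.
  have h2 : T (a - b * t) 0.
    by have := sw_add hT h (sw_opp (sw_scale hT ob Tt1)); rewrite mulr1 subrr.
  have T10 : T 1 0 by have := sw_scale hT oid h2; rewrite mulr0 mulVf.
  have T01 : T 0 1.
    have := sw_add hT Tt1 (sw_opp (sw_scale hT ot T10)).
    by rewrite mulr1 mulr0 subrr oppr0 addr0.
  exact: sw_not_full T10 T01.
case=> ob md; have := sw_add hT (sw_scale hT ob Tt1) (sw_m md m0).
by rewrite mulr1 addr0 mulrC addrC subrK.
Qed.

(* The submodules between pi o^2 and o^2 are the q + 1 lines of (o/m)^2. *)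
Lemma sandwich_classification : (forall a b, T a b <-> o a /\ m b) \/
   exists t, o t /\ forall a b, T a b <-> (o b /\ m (a - b * t)).
Proof.
case: (sw_big hT) => a0 [b0 [h0 hn]]; have [oa0 ob0] := sw_int hT h0.
case: (classic (m b0)) => mb0.
  have ma0 : ~ m a0 by move=> h; apply: hn.
  have [a00 oia] := o_unit oa0 ma0.
  left; apply: sw_diag.
  have h1 := sw_scale hT oia h0; rewrite mulVf // in h1.
  have h2 : T 0 (- (a0^-1 * b0)).
    by apply: sw_m; [exact: m0|apply: mN; rewrite mulrC; exact: mMo].
  by have := sw_add hT h1 h2; rewrite addr0 subrr.
have [b00 oib] := o_unit ob0 mb0.
right; exists (a0 / b0); split; first by apply: oM.
apply: sw_graph; first by apply: oM.
by have := sw_scale hT oib h0; rewrite mulVf // mulrC.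
Qed.
End Sandwich.

Definition D (n : nat) : 'M[F]_2 := mx2 1 0 0 (pi ^+ n).
Definition At (t : F) : 'M[F]_2 := mx2 pi 0 t 1.

Lemma D0 : D 0 = 1%:M. Proof. by rewrite /D expr0 mx2_1. Qed.

Lemma D_unit n (P : 'M[F]_2) : P \in unitmx -> D n *m P \in unitmx.
Proof. move=> hP; apply: mx2_unit => //; rewrite mul1r mul0r subr0; exact: expf_neq0. Qed.

Lemma At_unit t (P : 'M[F]_2) : P \in unitmx -> At t *m P \in unitmx.
Proof. move=> hP; apply: mx2_unit => //; by rewrite mulr1 mul0r subr0. Qed.

Lemma o_pi_div w : v w = 1 -> w != 0 -> o (pi / w).
Proof. move=> vw w0; right; rewrite vM ?invr_eq0 // vV // vw vpi; lia. Qed.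

Lemma adj_sandwich (g : 'M[F]_2) (y : vertex) : g \in unitmx -> adj (cls g) y ->
  exists c L' T, [/\ c != 0, sval y L', sandwich T &
    forall z, L' z <-> exists a b, T a b /\ z = rv a b *m (c *: g)].
Proof.
move=> hg [L [L' [w [hL hL' [vw w0] [s1 [z1 [h1 h1']]] [s2 [z2 [h2 h2']]]]]]].
move: hL; rewrite cls_val // => -[_ [c [c0 eL]]].
set g' := c *: g.
have hg' : g' \in unitmx by rewrite unitmxZ ?unitfE.
have eL' : forall z, L z <-> Lat g' z by move=> z; rewrite eL scale_Lat.
pose T a b := L' (rv a b *m g').
have LT : forall z, L' z <-> exists a b, T a b /\ z = rv a b *m g'.
  move=> z; split; last by case=> a [b [h ->]].
  move=> hz; have := s2 _ hz => /eL' /Lat_rv [a [b [ha hb e]]].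
  by exists a, b; split => //; rewrite /T -e.
have [P [hP eP _]] := vertex_cls hL'.
exists c, L', T; split => //; split.
- move=> a b c' d; rewrite /T !eP => -[u1 [hu1 e1]] [u2 [hu2 e2]].
  exists (u1 + u2); split; first by move=> i; rewrite mxE; apply: oD.
  by rewrite -rv_add mulmxDl e1 e2 mulmxDl.
- move=> al a b hal; rewrite /T !eP => -[u1 [hu1 e1]].
  exists (al *: u1); split; first by move=> i; rewrite mxE; apply: oM.
  by rewrite -rv_scale -!scalemxAl e1.
- move=> a b /s2 /eL' /Lat_rv [a' [b' [ha hb /rv_cancel]]] /(_ hg') [-> ->].
  by split.
- move=> a b ha hb; apply: s1; exists (rv (pi / w * a) (pi / w * b) *m g'); split.
    apply/eL'/Lat_rv; exists (pi / w * a), (pi / w * b).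
    by split => //; apply: oM => //; apply: o_pi_div.
  rewrite scalemxAl rv_scale; congr (rv _ _ *m _); field; by rewrite w0.
- move: h2 h2' => /eL' /Lat_rv [a [b [ha hb ->]]] hn; by exists a, b.
- have := s2 _ h1 => /eL' /Lat_rv [a [b [ha hb e]]].
  exists a, b; split; first by rewrite /T -e.
  case=> /mP ma /mP mb; apply: h1'; rewrite e.
  exists (rv (a / pi * (pi / w)) (b / pi * (pi / w)) *m g'); split.
    apply/eL'/Lat_rv; do 2 eexists; split; last reflexivity.
      by apply: oM => //; apply: o_pi_div.
    by apply: oM => //; apply: o_pi_div.
  rewrite scalemxAl rv_scale; congr (rv _ _ *m _); field; by rewrite pi0 w0.
Qed.

Lemma cls_of_coords (y : vertex) L' (T : F -> F -> Prop) (R g : 'M[F]_2) :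
  sval y L' -> (forall z, L' z <-> exists a b, T a b /\ z = rv a b *m g) ->
  (forall a b, T a b <-> exists a' b', [/\ o a', o b' & rv a b = rv a' b' *m R]) ->
  R *m g \in unitmx -> y = cls (R *m g).
Proof.
move=> hL' LT TR hRg; apply: (cls_of_Lat hL') hRg => z; rewrite LT Lat_rv; split.
  by case=> a [b [/TR [a' [b' [ha hb e]]] ->]]; exists a', b'; rewrite e mulmxA.
case=> a' [b' [ha hb ->]]; set u := rv a' b' *m R.
exists (u 0 i0), (u 0 i1); split; last by rewrite -rv_eta /u mulmxA.
by apply/TR; exists a', b'; split => //; rewrite -rv_eta.
Qed.

Lemma neighbours (g : 'M[F]_2) (y : vertex) : g \in unitmx -> adj (cls g) y ->
  y = cls (D 1 *m g) \/ exists t, o t /\ y = cls (At t *m g).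
Proof.
move=> hg /(adj_sandwich hg) [c [L' [T [c0 hL' hT LT]]]].
have gc : forall M, M *m g \in unitmx -> cls (M *m (c *: g)) = cls (M *m g).
  by move=> M hM; rewrite -scalemxAr; exact: cls_scale.
have hcg : c *: g \in unitmx by rewrite unitmxZ ?unitfE.
case: (sandwich_classification hT) => [hT'|[t [ot hT']]]; [left|right].
  rewrite -(gc _ (D_unit 1 hg)); apply: (cls_of_coords hL' LT); last exact: D_unit.
  move=> a b; rewrite hT'; split.
    case=> ha /mP hb; exists a, (b / pi); split => //.
    by rewrite /D rv_mul; congr rv; field; rewrite pi0.
  case=> a' [b' [ha hb]]; rewrite /D rv_mul => /rv_inj [-> ->].
  split; first by rewrite mulr1 mulr0 addr0.
  by rewrite mulr0 add0r expr1 mulrC; apply: mMo => //; exact: mpi.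
exists t; split => //; rewrite -(gc _ (At_unit t hg)).
apply: (cls_of_coords hL' LT); last exact: At_unit.
move=> a b; rewrite hT'; split.
  case=> hb /mP hd; exists ((a - b * t) / pi), b; split => //.
  by rewrite /At rv_mul; congr rv; [field; rewrite pi0|ring].
case=> a' [b' [ha hb]]; rewrite /At rv_mul => /rv_inj [-> ->].
rewrite mulr0 mulr1 add0r; split => //.
by rewrite addrK mulrC; apply: mMo => //; exact: mpi.
Qed.

Definition Pu (e : F) : 'M[F]_2 := mx2 1 e 0 1.
Definition Lo (e : F) : 'M[F]_2 := mx2 1 0 e 1.

Lemma Pu0 : Pu 0 = 1%:M. Proof. by rewrite /Pu mx2_1. Qed.

Lemma Pu_unit e (P : 'M[F]_2) : P \in unitmx -> Pu e *m P \in unitmx.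
Proof. move=> hP; apply: mx2_unit => //; rewrite mulr1 mulr0 subr0; exact: oner_neq0. Qed.

Lemma Lo_unit e (P : 'M[F]_2) : P \in unitmx -> Lo e *m P \in unitmx.
Proof. move=> hP; apply: mx2_unit => //; rewrite mulr1 mul0r subr0; exact: oner_neq0. Qed.

Lemma Lo_unit1 e : Lo e \in unitmx.
Proof. by rewrite -[Lo e]mulmx1; apply: Lo_unit; exact: unitmx1. Qed.

Lemma cls_Pu e (P : 'M[F]_2) : o e -> P \in unitmx -> cls (Pu e *m P) = cls P.
Proof. move=> he hP; apply: cls_det1 => //; [split; (exact: o0 || exact: o1 || done)|ring]. Qed.

Lemma cls_Lo e (P : 'M[F]_2) : o e -> P \in unitmx -> cls (Lo e *m P) = cls P.
Proof. move=> he hP; apply: cls_det1 => //; [split; (exact: o0 || exact: o1 || done)|ring]. Qed.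

Lemma D_ne n (P : 'M[F]_2) : (1 <= n)%N -> P \in unitmx -> cls (D n *m P) <> cls P.
Proof.
move=> hn hP e.
have hD : D n \in unitmx by rewrite -[D n]mulmx1; exact: D_unit (unitmx1 _ _).
have := @cls_eqM (D n) 1%:M P hD (unitmx1 _ _) hP.
rewrite mul1mx => /(_ e) [c [c0 [U [V [hU hV e1 e2]]]]].
move: e1 e2; rewrite mulmx1 (mx2_eta U) /D mx2_scale mx2_mul mx2_1.
move=> /mx2_inj [u00 _ _ u11] eV.
have oc : o c by move: hV; rewrite -eV => /intm_mx2 [+ _ _ _]; rewrite mulr1.
apply: o_piV.
have -> : pi^-1 = U i1 i1 * c * pi ^+ n.-1.
  have u11' : U i1 i1 * c * pi ^+ n = 1 by rewrite u11; ring.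
  clear e u11 eV hD; case: n hn u11' => // n _; rewrite exprS /= => u11'.
  apply: (mulfI pi0); rewrite mulfV //; rewrite -u11'; ring.
apply: oM; last exact: oX; apply: oM => //; move/intm_mx2: hU; by case.
Qed.

Lemma Lo_eq a b (P : 'M[F]_2) : P \in unitmx ->
  cls (Lo a *m P) = cls (Lo b *m P) -> o (a - b).
Proof.
move=> hP e; have := cls_eqM (Lo_unit1 a) (Lo_unit1 b) hP e.
move=> [c [c0 [U [V [hU hV e1 e2]]]]].
move: e1 e2; rewrite (mx2_eta U) (mx2_eta V) /Lo !mx2_scale !mx2_mul.
move=> /mx2_inj [u00 u01 u10 u11] /mx2_inj [v00 v01 v10 v11].
have U01 : U i0 i1 = 0.
  by apply: (mulIf c0); rewrite mul0r; move: u01; rewrite mulr0 mulr1 mulr0 add0r.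
have Uc : U i0 i0 * c = 1 by rewrite u00 U01; ring.
have Vc : c = V i1 i1 by rewrite -[c]mulr1 v11; ring.
have -> : a - b = U i0 i0 * V i1 i0.
  rewrite -[a - b]mul1r -Uc -mulrA; congr (_ * _).
  have -> : c * (a - b) = c * a - c * b by ring.
  by rewrite v10 Vc; ring.
by apply: oM.
Qed.

Lemma DPu_eq K a b (Q : 'M[F]_2) : Q \in unitmx ->
  cls (D K *m (Pu a *m Q)) = cls (D K *m (Pu b *m Q)) -> o ((a - b) / pi ^+ K).
Proof.
move=> hQ; rewrite !mulmxA => e.
have hu s : D K *m Pu s \in unitmx.
  by rewrite -[Pu s]mulmx1; apply: D_unit; apply: Pu_unit; exact: unitmx1.
have := cls_eqM (hu a) (hu b) hQ e => -[c [c0 [U [V [hU hV e1 e2]]]]].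
move: e1 e2; rewrite (mx2_eta U) (mx2_eta V) /D /Pu !mx2_mul !mx2_scale !mx2_mul.
move=> /mx2_inj [u00 u01 u10 u11] /mx2_inj [v00 v01 v10 v11].
have pK : pi ^+ K != 0 by rewrite expf_neq0.
move: u00 v00 v01; rewrite !(mul1r, mul0r, mulr0, mulr1, addr0, add0r) => u00 v00 v01.
have Uc : U i0 i0 * c = 1 by rewrite u00.
have -> : (a - b) / pi ^+ K = U i0 i0 * V i0 i1.
  rewrite -[(a - b) / pi ^+ K]mul1r -Uc -mulrA; congr (_ * _).
  apply: (mulIf pK); rewrite mulrA mulfVK //.
  have -> : c * (a - b) = c * a - c * b by ring.
  rewrite v01 v00; ring.
by apply: oM; [apply: hU|apply: hV].
Qed.

Lemma adj_normal_form (g : 'M[F]_2) (y : vertex) : g \in unitmx -> adj (cls g) y ->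
  exists Q, [/\ Q \in unitmx, cls Q = cls g & y = cls (D 1 *m Q)].
Proof.
move=> hg /(neighbours hg) [->|[t [ot ->]]]; first by exists g.
have hJ : [/\ o 0, o 1, o 1 & o 0] by split; (exact: o0 || exact: o1).
have dJ : 0 * 0 - 1 * 1 != 0 :> F by rewrite mulr0 mulr1 sub0r oppr_eq0 oner_neq0.
have iJ : o (0 * 0 - 1 * 1 : F)^-1 by rewrite mulr0 mulr1 sub0r invrN invr1; exact: oN o1.
have hQ : mx2 t 1 1 0 *m g \in unitmx.
  by apply: mx2_unit => //; rewrite mulr0 mulr1 sub0r oppr_eq0 oner_neq0.
exists (mx2 t 1 1 0 *m g); split => //.
  apply: cls_unimod => //; first by split => //; (exact: o0 || exact: o1).
    by rewrite mulr0 mulr1 sub0r oppr_eq0 oner_neq0.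
  by rewrite mulr0 mulr1 sub0r invrN invr1; exact: oN o1.
rewrite -(cls_unimod hJ dJ iJ (D_unit 1 hQ)).
by congr cls; rewrite !mulmxA /D /At !mx2_mul; congr (mx2 _ _ _ _ *m _); ring.
Qed.

Lemma walk_extend n (Q : 'M[F]_2) (y : vertex) : (1 <= n)%N -> Q \in unitmx ->
  adj (cls (D n *m Q)) y -> y <> cls (D n.-1 *m Q) ->
  exists s, o s /\ y = cls (D n.+1 *m (Pu (pi ^+ n * s) *m Q)).
Proof.
move=> hn hQ /(neighbours (D_unit n hQ)) [->|[t [ot ->]]] hne.
  exists 0; split; first exact: o0.
  congr cls; rewrite !mulmxA /D /Pu !mx2_mul.
  by congr (mx2 _ _ _ _ *m _); rewrite ?exprS ?expr1; ring.
case: n hn hne => // n _ /= hne.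
case: (classic (m t)) => mt.
  exfalso; apply: hne.
  have -> : At t *m (D n.+1 *m Q) = pi *: (Lo (t / pi) *m (D n *m Q)).
    rewrite !mulmxA scalemxAl /D /At /Lo !mx2_mul mx2_scale.
    by congr (mx2 _ _ _ _ *m _); rewrite ?exprS; field; rewrite ?pi0.
  rewrite cls_scale //; last exact: Lo_unit (D_unit n hQ).
  apply: cls_Lo; [exact/mP|exact: D_unit].
have [t0 oti] := o_unit ot mt.
exists t^-1; split => //.
have h1 : [/\ o pi, o (- t^-1), o t & o 0] by split; [exact: opi|exact: oN|done|exact: o0].
have h2 : pi * 0 - - t^-1 * t != 0 by rewrite mulr0 sub0r mulNr opprK mulVf // oner_neq0.
have h3 : o (pi * 0 - - t^-1 * t)^-1.
  by rewrite mulr0 sub0r mulNr opprK mulVf // invr1; exact: o1.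
rewrite -(cls_unimod h1 h2 h3 (D_unit n.+2 (Pu_unit (pi ^+ n.+1 * t^-1) hQ))).
congr cls; rewrite !mulmxA /D /At /Pu !mx2_mul.
by congr (mx2 _ _ _ _ *m _); rewrite ?exprS; field; rewrite ?t0 ?pi0.
Qed.

Lemma cls_DPu i (Q : 'M[F]_2) s e : o e -> Q \in unitmx ->
  cls (D i *m (Pu (s + pi ^+ i * e) *m Q)) = cls (D i *m (Pu s *m Q)).
Proof.
move=> he hQ; rewrite -(cls_Pu he (D_unit i (Pu_unit s hQ))).
by congr cls; rewrite !mulmxA /D /Pu !mx2_mul; congr (mx2 _ _ _ _ *m _); ring.
Qed.

Lemma walk_normal_form (y : nat -> vertex) N (Q : 'M[F]_2) : (1 <= N)%N -> Q \in unitmx ->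
  y 0%N = cls Q -> y 1%N = cls (D 1 *m Q) ->
  (forall i, (i < N)%N -> adj (y i) (y i.+1)) ->
  (forall i, (i.+2 <= N)%N -> y i <> y i.+2) ->
  exists s, o s /\ forall i, (i <= N)%N -> y i = cls (D i *m (Pu s *m Q)).
Proof.
move=> hN hQ y0 y1; elim: N hN => // N IH _ hadj hnb.
case: N IH hadj hnb => [_|N IH] hadj hnb.
  exists 0; split; first exact: o0.
  by case=> [|[|]] // _; rewrite Pu0 mul1mx ?D0 ?mul1mx.
have [s [os hs]] := IH erefl (fun i hi => hadj i (ltnW hi)) (fun i hi => hnb i (leqW hi)).
have hyN : adj (cls (D N.+1 *m (Pu s *m Q))) (y N.+2) by rewrite -hs //; apply: hadj.
have hne : y N.+2 <> cls (D N.+1.-1 *m (Pu s *m Q)) by rewrite /= -hs //; apply/nesym/hnb.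
have [s' [os' e]] := walk_extend (ltn0Sn N) (Pu_unit s hQ) hyN hne.
exists (s + pi ^+ N.+1 * s'); split; first by apply: oD => //; apply: oM => //; exact: oX.
move=> i; rewrite leq_eqVlt => /orP [/eqP ->|hi].
  rewrite e; congr (cls (D _ *m _)); rewrite !mulmxA /Pu mx2_mul.
  by congr (mx2 _ _ _ _ *m _); ring.
rewrite hs //.
have -> : pi ^+ N.+1 * s' = pi ^+ i * (pi ^+ (N.+1 - i) * s').
  by rewrite mulrA -exprD subnKC.
by rewrite cls_DPu //; apply: oM => //; exact: oX.
Qed.

Lemma no_cycle (y : nat -> vertex) N : (1 <= N)%N ->
  (forall i, (i < N)%N -> adj (y i) (y i.+1)) ->
  (forall i, (i.+2 <= N)%N -> y i <> y i.+2) -> y N <> y 0%N.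
Proof.
move=> hN hadj hnb.
have [g [hg eg]] := vertex_ex (y 0%N).
have [Q [hQ eQ e1]] := adj_normal_form hg (ltac:(rewrite -eg; exact: hadj 0%N hN)).
have [s [os hs]] := walk_normal_form hN hQ (etrans eg (esym eQ)) e1 hadj hnb.
rewrite hs // eg -eQ -(cls_Pu os hQ).
exact: D_ne (Pu_unit s hQ).
Qed.

Lemma adj_sym (x y : vertex) : adj x y -> adj y x.
Proof.
case=> L [L' [w [hL hL' [vw w0] [s1 [z1 [h1 h1']]] [s2 [z2 [h2 h2']]]]]].
exists L', (scale w L), w; split => //.
- exact: sval_scale.
- split.
    by move=> z [y' [hy ->]]; exists y'; split => //; apply: s2.
  exists (w *: z2); split; first by exists z2.
  case=> y' [hy' e]; apply: h2'.
  by have := congr1 (fun u => w^-1 *: u) e; rewrite !scalerA mulVf // !scale1r => ->.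
- split; first by move=> z [y' [hy ->]]; apply: s1; exists y'.
  by exists z1.
Qed.

(* No vertex is adjacent to itself, since [cls (D 1 Q) <> cls Q]. *)
Lemma adj_irr (x : vertex) : ~ adj x x.
Proof.
move=> h; have [g [hg eg]] := vertex_ex x.
have [Q [hQ eQ e1]] := adj_normal_form hg (ltac:(rewrite -eg; exact: h)).
by apply: (D_ne (leqnn 1) hQ); rewrite -e1 eg eQ.
Qed.

Lemma walk0E (x y : vertex) : walk 0 x y -> x = y.
Proof. by move=> h; inversion h. Qed.

Lemma walk1E (x y : vertex) : walk 1 x y -> adj x y.
Proof. by move=> h; inversion h as [|n x' y' z' hxy hw]; rewrite -(walk0E hw). Qed.

Lemma dist1 (x y : vertex) : dist x y 1 <-> adj x y.
Proof.
split; first by case=> /walk1E.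
move=> h; split; first by apply: (walkS h); constructor.
case=> // /walk0E e; subst y; case: (adj_irr h).
Qed.

Definition bas (x : vertex) : 'M[F]_2 :=
  proj1_sig (constructive_indefinite_description _ (vertex_ex x)).

Lemma basP x : bas x \in unitmx /\ x = cls (bas x).
Proof. by rewrite /bas; case: constructive_indefinite_description. Qed.

Definition act (M : 'M[F]_2) (x : vertex) : vertex := cls (bas x *m M).

Lemma cls_mulr (P P' M : 'M[F]_2) : P \in unitmx -> P' \in unitmx -> M \in unitmx ->
  cls P = cls P' -> cls (P *m M) = cls (P' *m M).
Proof.
move=> hP hP' hM /cls_eqP - /(_ hP hP') [c [c0 [U [V [hU hV e1 e2]]]]].
apply/cls_eqP; rewrite ?unitmx_mul ?hP ?hP' ?hM //.
exists c; split => //; exists U, V; split => //.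
  by rewrite e1 scalemxAl mulmxA.
by rewrite scalemxAl e2 mulmxA.
Qed.

Lemma act_cls (M P : 'M[F]_2) :
  M \in unitmx -> P \in unitmx -> act M (cls P) = cls (P *m M).
Proof.
move=> hM hP; rewrite /act; have [h1 h2] := basP (cls P).
by apply: cls_mulr => //; rewrite -h2.
Qed.

Lemma act_comp (M N : 'M[F]_2) x : M \in unitmx -> N \in unitmx ->
  act M (act N x) = act (N *m M) x.
Proof.
move=> hM hN; have [h1 h2] := basP x; rewrite h2 !act_cls ?unitmx_mul ?h1 ?hN //.
by rewrite mulmxA.
Qed.

Lemma act1 x : act 1%:M x = x.
Proof. have [h1 h2] := basP x; by rewrite /act mulmx1 -h2. Qed.

Lemma act_inv (M : 'M[F]_2) x : M \in unitmx -> act (invmx M) (act M x) = x.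
Proof. move=> hM; by rewrite act_comp ?unitmx_inv // mulmxV // act1. Qed.

Lemma act_inv' (M : 'M[F]_2) x : M \in unitmx -> act M (act (invmx M) x) = x.
Proof. move=> hM; by rewrite act_comp ?unitmx_inv // mulVmx // act1. Qed.

Lemma mat_acts_act (M : 'M[F]_2) x : M \in unitmx -> mat_acts M x (act M x).
Proof.
move=> hM L; have [h1 h2] := basP x; rewrite {1}h2 svalP_cls // => -[c [c0 e]].
rewrite /act svalP_cls ?unitmx_mul ?h1 //; exists c; split => // z; split.
  by case=> y' [/e [u [hu ->]] ->]; exists u; split => //; rewrite scalemxAl mulmxA.
case=> u [hu ->]; exists (u *m (c *: bas x)); split; first by apply/e; exists u.
by rewrite scalemxAl mulmxA.
Qed.

Lemma act_adj (M : 'M[F]_2) x y : M \in unitmx -> adj x y -> adj (act M x) (act M y).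
Proof.
move=> hM [L [L' [w [hL hL' hw [s1 [z1 [h1 h1']]] [s2 [z2 [h2 h2']]]]]]].
have inj : forall a b : vec F, a *m M = b *m M -> a = b.
  by move=> a b e; rewrite -(mulmxK hM a) e mulmxK.
exists (mat_image M L), (mat_image M L'), w; split => //.
- exact: mat_acts_act.
- exact: mat_acts_act.
- split.
    move=> z [y' [[y'' [hy'' ->]] ->]]; exists (w *: y'').
    by split; [apply: s1; exists y''|rewrite scalemxAl].
  exists (z1 *m M); split; first by exists z1.
  case=> y' [[y'' [hy'' ->]] e]; apply: h1'; exists y''; split => //.
  by apply: inj; rewrite e scalemxAl.
- split; first by move=> z [y' [hy ->]]; exists y'; split => //; apply: s2.
  exists (z2 *m M); split; first by exists z2.
  by case=> y' [hy' /inj e]; apply: h2'; rewrite e.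
Qed.

Lemma act_adjE (M : 'M[F]_2) x y : M \in unitmx -> adj (act M x) (act M y) <-> adj x y.
Proof.
move=> hM; split; last exact: act_adj.
have hMi : invmx M \in unitmx by rewrite unitmx_inv.
by move=> /(act_adj hMi); rewrite !act_inv.
Qed.

Lemma walk_map (f : vertex -> vertex) n x y :
  (forall a b, adj a b -> adj (f a) (f b)) -> walk n x y -> walk n (f x) (f y).
Proof.
move=> hf; elim=> {n x y} [x|n x y z hxy _ IH]; first by constructor.
exact: walkS (hf _ _ hxy) IH.
Qed.

Lemma is_aut_adj (f : vertex -> vertex) : bijective f ->
  (forall a b, adj a b <-> adj (f a) (f b)) -> is_aut f.
Proof.
move=> bf hf; split => // x y n.
have [g fg gf] := bf.
have hg : forall a b, adj a b -> adj (g a) (g b).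
  by move=> a b h; apply/hf; rewrite !gf.
have hw : forall m, walk m x y <-> walk m (f x) (f y).
  move=> m; split; first by apply: walk_map => a b /hf.
  by move=> /(walk_map hg); rewrite !fg.
rewrite /dist; split; case=> h1 h2; split; try exact/hw.
  by move=> m /hw; apply: h2.
by move=> m /hw; apply: h2.
Qed.

Lemma is_aut_comp (f g : vertex -> vertex) :
  is_aut f -> is_aut g -> is_aut (fun z => f (g z)).
Proof.
case=> bf hf [bg hg]; split; first exact: bij_comp.
by move=> x y n; rewrite hg hf.
Qed.

Lemma is_aut_adjE (f : vertex -> vertex) a b :
  is_aut f -> (adj a b <-> adj (f a) (f b)).
Proof. by case=> _ h; rewrite -!dist1 h. Qed.

Lemma is_aut_inj (f : vertex -> vertex) : is_aut f -> injective f.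
Proof. by case=> [[g fg _]] _; exact: can_inj fg. Qed.

Lemma act_aut (M : 'M[F]_2) : M \in unitmx -> is_aut (act M).
Proof.
move=> hM; apply: is_aut_adj => [|a b]; last by rewrite act_adjE.
by exists (act (invmx M)) => z; [exact: act_inv|exact: act_inv'].
Qed.

Lemma act_Ghat e (M : 'M[F]_2) : M \in unitmx -> in_Ghat e (act M).
Proof.
move=> hM; split; first exact: act_aut.
by move=> y1 y2 _; exists M; split => // y _; exact: mat_acts_act.
Qed.

Lemma Ghat_act e (M : 'M[F]_2) b :
  M \in unitmx -> in_Ghat e b -> in_Ghat e (fun z => act M (b z)).
Proof.
move=> hM [ab hb]; split; first exact: is_aut_comp (act_aut hM) ab.
move=> y1 y2 h; have [g' [hg' hg]] := hb y1 y2 h.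
exists (g' *m M); split; first by rewrite unitmx_mul hg' hM.
move=> y hy L hL; have := mat_acts_act hM (hg y hy L hL) => h'.
apply: (sval_ext h') => z; split.
  by case=> z' [[z'' [hz'' ->]] ->]; exists z''; rewrite mulmxA.
by case=> z' [hz' ->]; exists (z' *m g'); split; [exists z'|rewrite mulmxA].
Qed.


Section Path.
Variable xs : int -> vertex.
Hypothesis hxs : dpath xs.

Lemma xs_adj (a b : int) : b = a + 1 -> adj (xs a) (xs b).
Proof. by move=> ->; case: (hxs a). Qed.

Lemma xs_adj' (a b : int) : a = b + 1 -> adj (xs a) (xs b).
Proof. by move=> ->; apply: adj_sym; case: (hxs b). Qed.

Lemma xs_nb (a b : int) : b = a + 2 -> xs a <> xs b.
Proof. by move=> ->; case: (hxs a). Qed.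

Lemma xs_nb' (a b : int) : a = b + 2 -> xs a <> xs b.
Proof. by move=> -> e; case: (hxs b) => _; apply; rewrite e. Qed.

Lemma xs_inj_lt (j c : int) : j < c -> xs c <> xs j.
Proof.
move=> hjc e; pose y (i : nat) := xs (j + i%:Z).
apply: (@no_cycle y `|c - j|%N); rewrite /y.
- lia.
- move=> i _; apply: xs_adj; lia.
- move=> i _; apply: xs_nb; lia.
- by rewrite (_ : j + `|c - j|%N%:Z = c) ?e ?addr0 //; lia.
Qed.

(* A ray from x_j that first meets the path at x_c, c > j, from outside
   would close a cycle p_0, ..., p_(A+1) = x_c, x_(c-1), ..., x_j. *)
Lemma ray_leaves_xs (j c : int) (p : nat -> vertex) A : j < c -> ray p ->
  p 0%N = xs j -> p A.+1 = xs c -> p A <> xs (c - 1) -> False.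
Proof.
move=> hc hp p0 pA1 hpA.
pose y (i : nat) := if (i <= A)%N then p i else xs (c - (i%:Z - A.+1%:Z)).
have yA1 : forall i, (A < i)%N -> y i = xs (c - (i%:Z - A.+1%:Z)).
  by move=> i hi; rewrite /y leqNgt hi.
apply: (@no_cycle y (A.+1 + `|c - j|)%N) => //.
- move=> i hi; case: (ltngtP i A) => hiA.
  + rewrite /y (ltnW hiA) hiA; by case: (hp i).
  + rewrite !yA1 //; last exact: ltnW.
    apply: xs_adj'; lia.
  + rewrite hiA /y leqnn ltnn; case: (hp A) => h _; rewrite pA1 in h.
    by rewrite (_ : c - (A.+1%:Z - A.+1%:Z) = c) //; lia.
- move=> i hi; case: (ltngtP i.+1 A) => hiA.
  + rewrite /y (ltnW (ltnW hiA)) hiA; by case: (hp i).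
  + case: (ltngtP i A) => hiA'.
    * lia.
    * by rewrite !yA1 //; try lia; apply: xs_nb'; lia.
    * rewrite hiA' [y A.+2]yA1 // {1}/y leqnn.
      by rewrite (_ : c - (A.+2%:Z - A.+1%:Z) = c - 1) //; lia.
  + have e1 : y i = p i by rewrite /y -hiA leqnSn.
    have e2 : y i.+2 = p i.+2.
      rewrite yA1 -hiA //; move: pA1; rewrite -hiA => ->; congr xs; lia.
    rewrite e1 e2; by case: (hp i).
- rewrite yA1; last lia.
  rewrite /y leq0n p0; congr xs; lia.
Qed.

Lemma ray_along_xs (j : int) (p : nat -> vertex) : ray p -> p 0%N = xs j ->
  forall A (c : int), j <= c -> (forall n : nat, p (n + A)%N = xs (n%:Z + c)) ->
  forall n : nat, p n = xs (j + n%:Z).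
Proof.
move=> hp p0; elim=> [|A IH] c hjc hA.
  case: (ltP j c) => hc.
    by exfalso; apply: (xs_inj_lt hc); rewrite -p0 -(addn0 0%N) hA add0r.
  have ec : c = j by apply/eqP; rewrite eq_le hc hjc.
  by move=> n; have := hA n; rewrite addn0 ec => ->; rewrite addrC.
have pA1 : p A.+1 = xs c by rewrite -(add0n A.+1) hA add0r.
case: (ltP j c) => hc; last first.
  have ec : c = j by apply/eqP; rewrite eq_le hc hjc.
  exfalso; apply: (@no_cycle p A.+1) => //.
  - by move=> i _; case: (hp i).
  - by move=> i _; case: (hp i).
  - by rewrite pA1 ec p0.
case: (classic (p A = xs (c - 1))) => hpA; last first.
  by exfalso; exact: (ray_leaves_xs hc hp p0 pA1 hpA).
apply: (IH (c - 1)); first lia.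
case=> [|n]; first by rewrite add0n hpA add0r.
rewrite addSn -addnS hA; congr xs; lia.
Qed.

Lemma ray_unique (j : int) (p : nat -> vertex) : ray p -> p 0%N = xs j ->
  ray_equiv p (end_ray xs) -> forall n : nat, p n = xs (j + n%:Z).
Proof.
move=> hp p0 [a [b hab]].
apply: (ray_along_xs hp p0 (A := (a + `|j|)%N) (c := b%:Z + `|j|%:Z)); first lia.
move=> m; rewrite addnA -addnAC hab /end_ray; congr xs; lia.
Qed.

Lemma xs_ray (j : int) : ray (fun n : nat => xs (j + n%:Z)).
Proof.
move=> n; split; first by apply: xs_adj; lia.
by apply: xs_nb; lia.
Qed.

Lemma xs_equiv (j : int) : ray_equiv (fun n : nat => xs (j + n%:Z)) (end_ray xs).
Proof.
exists (absz j), (absz (j + (absz j)%:Z)) => n; rewrite /end_ray; congr xs; lia.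
Qed.
End Path.

Section Stabilisers.
Variable xs : int -> vertex.
Hypothesis hxs : dpath xs.
Variable e : nat.

Definition fixes_from (j : int) (g : vertex -> vertex) : Prop :=
  forall n : nat, g (xs (j + n%:Z)) = xs (j + n%:Z).

Lemma fixes_from_ge (j : int) g : fixes_from j g -> forall t, j <= t -> g (xs t) = xs t.
Proof.
move=> h t ht; have := h (absz (t - j)).
by rewrite (_ : j + (absz (t - j))%:Z = t) //; lia.
Qed.

(* Since the ray from x_j to omega is x_j, x_(j+1), ..., an element of G^
   lies in N^_j exactly when it fixes all x_n, n >= j. *)
Lemma NkP (j : int) g : in_Nk e xs j g <-> in_Ghat e g /\ fixes_from j g.
Proof.
split.
  move=> h; split; first by do 3 case: h => h _.
  case: h => _ h n; apply: (h (fun n : nat => xs (j + n%:Z))).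
  - exact: xs_ray.
  - by rewrite addr0.
  - exact: xs_equiv.
case=> hg h; have hge := fixes_from_ge h.
split; last by move=> p hp p0 hpe n; rewrite (ray_unique hxs hp p0 hpe); exact: h.
split; last by exists j; apply: hge.
by split => //; exists (absz j), (absz j) => n; rewrite /end_ray hge //; lia.
Qed.

Lemma Nk_mono (k : int) g : in_Nk e xs (k - 1) g -> in_Nk e xs k g.
Proof.
move=> /NkP [hg hf]; apply/NkP; split => // n.
by have := hf n.+1; rewrite (_ : k - 1 + n.+1%:Z = k + n%:Z) //; lia.
Qed.
End Stabilisers.

Lemma ray_partial_coords (y : nat -> vertex) :
  (forall i, adj (y i) (y i.+1)) -> (forall i, y i <> y i.+2) ->
  exists Q, Q \in unitmx /\ forall N : nat, exists s, o s /\
    forall i, (i <= N.+1)%N -> y i = cls (D i *m (Pu s *m Q)).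
Proof.
move=> hadj hnb.
have [g [hg eg]] := vertex_ex (y 0%N).
have [Q [hQ eQ e1]] := adj_normal_form hg (ltac:(rewrite -eg; exact: hadj 0%N)).
exists Q; split => // N.
apply: (walk_normal_form (ltn0Sn N) hQ (etrans eg (esym eQ)) e1).
  by move=> i _; apply: hadj.
by move=> i _; apply: hnb.
Qed.

Section Completeness.
Hypothesis vC : forall u : nat -> F,
  (forall N : int, exists M : nat, forall i j : nat,
      (M <= i)%N -> (M <= j)%N -> vclose v N (u i) (u j)) ->
  exists l, forall N : int, exists M : nat, forall i : nat,
      (M <= i)%N -> vclose v N (u i) l.

(* By completeness, the parameters s of the partial normal forms converge,
   so every ray is y_i = cls (D i H) for a single matrix H. *)
Lemma ray_coord (y : nat -> vertex) :
  (forall i, adj (y i) (y i.+1)) -> (forall i, y i <> y i.+2) ->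
  exists H, H \in unitmx /\ forall i, y i = cls (D i *m H).
Proof.
move=> hadj hnb; have [Q [hQ ex]] := ray_partial_coords hadj hnb.
pose sg N := proj1_sig (constructive_indefinite_description _ (ex N)).
have sgP N : o (sg N) /\ forall i, (i <= N.+1)%N -> y i = cls (D i *m (Pu (sg N) *m Q)).
  by rewrite /sg; case: constructive_indefinite_description.
have cauchy (K i j : nat) : (K <= i)%N -> (K <= j)%N -> vclose v K%:Z (sg i) (sg j).
  move=> hi hj; apply/vcloseP; apply: (@DPu_eq K _ _ Q hQ).
  by rewrite -(proj2 (sgP i)) ?(proj2 (sgP j)) //; apply: leqW.
have [l hl] : exists l, forall N : int, exists M : nat, forall i : nat,
    (M <= i)%N -> vclose v N (sg i) l.
  apply: vC => N; exists `|N|%N => i j hi hj.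
  by apply: (vclose_mono _ (cauchy _ _ _ hi hj)); lia.
exists (Pu l *m Q); split; first exact: Pu_unit.
move=> i; have [M hM] := hl i%:Z.
set n := maxn i M.
rewrite (proj2 (sgP n) i); last by apply: leqW; exact: leq_maxl.
have -> : sg n = l + pi ^+ i * ((sg n - l) / pi ^+ i).
  by rewrite mulrC mulfVK ?expf_neq0 // addrC subrK.
by rewrite cls_DPu //; apply/vcloseP; apply: hM; exact: leq_maxr.
Qed.
End Completeness.

Lemma cls_Lo_congr a b (P : 'M[F]_2) : m (a - b) -> P \in unitmx ->
  cls (Lo (a / pi) *m P) = cls (Lo (b / pi) *m P).
Proof.
move=> hab hP.
have -> : Lo (a / pi) = Lo ((a - b) / pi) *m Lo (b / pi).
  by rewrite /Lo mx2_mul; congr mx2; field; rewrite ?pi0.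
by rewrite -mulmxA cls_Lo //; [exact/mP|exact: Lo_unit].
Qed.

Lemma DLo n s : D n *m Lo s = Lo (pi ^+ n * s) *m D n.
Proof. by rewrite /D /Lo !mx2_mul; congr mx2; ring. Qed.

Section Cosets.
Variables (xs : int -> vertex) (e : nat) (k : int) (H : 'M[F]_2).
Hypothesis hxs : dpath xs.
Hypothesis hH : H \in unitmx.
Hypothesis eH : forall n : nat, xs (k - 1 + n%:Z) = cls (D n *m H).

Definition coset_rep (a : F) : 'M[F]_2 := invmx H *m Lo (a / pi) *m H.

Lemma coset_rep_unit a : coset_rep a \in unitmx.
Proof. by rewrite !unitmx_mul unitmx_inv hH Lo_unit1. Qed.

Lemma H_coset_rep a : H *m coset_rep a = Lo (a / pi) *m H.
Proof. by rewrite /coset_rep !mulmxA mulmxV // mul1mx. Qed.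

Lemma coset_rep_fixes a : o a -> fixes_from xs k (act (coset_rep a)).
Proof.
move=> oa n; have := eH n.+1; rewrite (_ : k - 1 + n.+1%:Z = k + n%:Z); last lia.
move=> ->; rewrite act_cls ?coset_rep_unit ?D_unit // -mulmxA H_coset_rep.
rewrite mulmxA DLo -mulmxA cls_Lo ?D_unit //.
have -> : pi ^+ n.+1 * (a / pi) = pi ^+ n * a by rewrite exprS; field; rewrite ?pi0.
by apply: oM => //; exact: oX.
Qed.

Lemma coset_rep_moves a : act (coset_rep a) (xs (k - 1)) = cls (Lo (a / pi) *m H).
Proof.
have := eH 0%N; rewrite addr0 D0 mul1mx => ->.
by rewrite act_cls ?coset_rep_unit // H_coset_rep.
Qed.

Lemma coset_rep_Nk a : o a -> in_Nk e xs k (act (coset_rep a)).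
Proof.
move=> oa; apply/(NkP hxs); split; first exact: act_Ghat (coset_rep_unit a).
exact: coset_rep_fixes.
Qed.

(* An element of N^_k sends x_(k-1) to a neighbour of x_k other than
   x_(k+1), that is, to some [cls (Lo (t / pi) H)]. *)
Lemma Nk_moves_prev b : in_Nk e xs k b ->
  exists t, o t /\ b (xs (k - 1)) = cls (Lo (t / pi) *m H).
Proof.
move=> /(NkP hxs) [[baut _] /fixes_from_ge bfix].
have xk : xs k = cls (D 1 *m H) by have := eH 1%N; rewrite (_ : k - 1 + 1%:Z = k) //; lia.
have xk2 : xs (k + 1) = cls (D 1 *m (D 1 *m H)).
  have := eH 2%N; rewrite (_ : k - 1 + 2%:Z = k + 1); last lia.
  by move=> ->; rewrite mulmxA /D mx2_mul; congr (cls (mx2 _ _ _ _ *m _)); ring.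
have hadj : adj (cls (D 1 *m H)) (b (xs (k - 1))).
  rewrite -xk -(bfix k (lexx k)); apply: adj_sym; apply/(is_aut_adjE (xs (k - 1)) (xs k) baut).
  by apply: (xs_adj hxs); lia.
case: (neighbours (D_unit 1 hH) hadj) => [e2|[t [ot et]]].
  exfalso; rewrite -xk2 -(bfix (k + 1)) in e2; last lia.
  by apply: (xs_nb hxs (a := k - 1) (b := k + 1)); [lia|apply: (is_aut_inj baut)].
exists t; split => //; rewrite et.
have -> : At t *m (D 1 *m H) = pi *: (Lo (t / pi) *m H).
  rewrite mulmxA scalemxAl /At /D /Lo mx2_mul mx2_scale.
  by congr (mx2 _ _ _ _ *m _); rewrite ?expr1; field; rewrite ?pi0.
by rewrite cls_scale // Lo_unit.
Qed.

Lemma in_coset_rep a b : o a -> in_Nk e xs k b ->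
  b (xs (k - 1)) = cls (Lo (a / pi) *m H) ->
  in_coset (in_Nk e xs (k - 1)) (act (coset_rep a)) b.
Proof.
move=> oa /(NkP hxs) [hb bfix] ba.
have hM := coset_rep_unit a.
exists (fun z => act (invmx (coset_rep a)) (b z)); split; last by move=> z; rewrite act_inv'.
apply/(NkP hxs); split; first by apply: Ghat_act => //; rewrite unitmx_inv.
case=> [|n]; first by rewrite addr0 ba -coset_rep_moves act_inv.
rewrite (_ : k - 1 + n.+1%:Z = k + n%:Z); last lia.
by rewrite bfix -{1}(coset_rep_fixes oa n) act_inv.
Qed.

Lemma coset_moves a b : in_coset (in_Nk e xs (k - 1)) (act (coset_rep a)) b ->
  b (xs (k - 1)) = cls (Lo (a / pi) *m H).
Proof.
case=> n [/(NkP hxs) [_ nfix] ->].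
by have := nfix 0%N; rewrite addr0 => ->; rewrite coset_rep_moves.
Qed.
End Cosets.

Lemma Nk_index (q : nat) (r : 'I_q -> F) (xs : int -> vertex) (e : nat) (k : int) :
  (forall u : nat -> F,
     (forall N : int, exists M : nat, forall i j : nat,
        (M <= i)%N -> (M <= j)%N -> vclose v N (u i) (u j)) ->
     exists l, forall N : int, exists M : nat, forall i : nat,
        (M <= i)%N -> vclose v N (u i) l) ->
  (forall i, o (r i)) -> (forall i j, m (r i - r j) -> i = j) ->
  (forall x, o x -> exists i, m (x - r i)) ->
  dpath xs -> has_index (in_Nk e xs k) (in_Nk e xs (k - 1)) q.
Proof.
move=> vC r_o r_inj r_surj hxs.
have [H [hH eH]] := ray_coord vC (fun i => proj1 (xs_ray hxs (k - 1) i))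
                                 (fun i => proj2 (xs_ray hxs (k - 1) i)).
exists (fun i => act (coset_rep H (r i))); split.
  by move=> i; apply: (coset_rep_Nk e hxs hH eH).
move=> b hb; have [t [ot bt]] := Nk_moves_prev hxs hH eH hb.
have [i hi] := r_surj t ot.
have bi : b (xs (k - 1)) = cls (Lo (r i / pi) *m H) by rewrite bt (cls_Lo_congr hi hH).
exists i; split; first exact: (in_coset_rep hxs hH eH).
move=> j /(coset_moves hxs hH eH) bj; apply: r_inj; apply/mP.
by rewrite mulrBl; apply: (Lo_eq hH); rewrite -bj bi.
Qed.
End BruhatTits.

Theorem mainTheorem15 (F : fieldType) (v : F -> int) (q : nat)
  (hF : is_local_field v q) (e : nat) (he : (1 <= e)%N)
  (xs : int -> vertex v) (hxs : dpath xs) (k : int) :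
  (forall g, in_Nk e xs (k - 1) g -> in_Nk e xs k g) /\
  has_index (in_Nk e xs k) (in_Nk e xs (k - 1)) q.
Proof.
case: hF => vM vU [w [w0 vw]] [r [r_o r_inj r_surj]] vC.
split; first exact: (Nk_mono vM vU w0 vw hxs).
exact: (Nk_index vM vU w0 vw e k vC r_o r_inj r_surj hxs).
Qed.
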